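(* Let $X$ and $Y$ be nonempty sets with $\operatorname{card} Y\ge 2$, and let $\mathcal P$ be a nonempty collection of subsets of $X$. Define the binary relation $\hat{\mathcal P}_w$ on $Y^X$ by declaring $f\,\hat{\mathcal P}_w\,g$ if and only if there exists $P\in\mathcal P$ with $P\subseteq\{x\in X\mid f(x)=g(x)\}$. Then $\mathcal P$ is a filterbase on $X$ if and only if $\hat{\mathcal P}_w$ is a nontrivial equivalence relation on $Y^X$.
   Context: Let $X$ be a nonempty set. A nonempty collection $\mathcal P$ of subsets of $X$ is a filterbase on $X$ if it satisfies: (F0) for every $n\ge 1$ and all $A_1,\dots,A_n\in\mathcal P$, $A_1\cap\cdots\cap A_n\neq\emptyset$; (F2) for all $A,B\in\mathcal P$ there is $C\in\mathcal P$ with $C\subseteq A\cap B$. $Y^X$ denotes the set of all functions $X\to Y$. An equivalence relation on a set $S$ is called nontrivial if it is not the total relation $S\times S$ (i.e. not all pairs of elements are related). *)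

From Stdlib Require Import List.
Import ListNotations.

Definition list_inter {X : Type} (l : list (X -> Prop)) : X -> Prop :=
  fun x => Forall (fun A => A x) l.

(* Filterbase: nonempty collection, (F0) every finite nonempty subfamily has
   nonempty intersection, (F2) downward directed. *)
Definition filterbase {X : Type} (PP : (X -> Prop) -> Prop) : Prop :=
  (exists A, PP A) /\
  (forall l : list (X -> Prop), l <> [] -> Forall PP l ->
      exists x, list_inter l x) /\
  (forall A B, PP A -> PP B ->
      exists C, PP C /\ (forall x, C x -> A x /\ B x)).

Definition Pw_rel {X Y : Type} (PP : (X -> Prop) -> Prop) (f g : X -> Y) : Prop :=
  exists P, PP P /\ (forall x, P x -> f x = g x).

Definition is_equivalence {S : Type} (R : S -> S -> Prop) : Prop :=
  (forall a, R a a) /\ (forall a b, R a b -> R b a) /\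
  (forall a b c, R a b -> R b c -> R a c).

Definition nontrivial_rel {S : Type} (R : S -> S -> Prop) : Prop :=
  exists a b, ~ R a b.

(** Transitivity of
    this relation is exactly directedness (F2): given [A, B] in [PP], the
    constant map, the indicator of [A] and the indicator of [A /\ B] (valued in
    two distinct points of [Y]) are related through [A] and [B], so the member
    witnessing transitivity lies inside [A /\ B]. Nontriviality says exactly
    that no member of [PP] is empty, since an empty member relates everything
    and a nonempty one separates two distinct constants. Under directedness,
    every finite intersection of members contains a member, so (F0) amounts to
    members being nonempty. *)

From Stdlib Require Import List Classical ClassicalEpsilon.
Import ListNotations.

Set Implicit Arguments.
Unset Strict Implicit.

Definition directed {X : Type} (PP : (X -> Prop) -> Prop) : Prop :=
  forall A B, PP A -> PP B -> exists C, PP C /\ (forall x, C x -> A x /\ B x).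

Lemma directed_list_inter (X : Type) (PP : (X -> Prop) -> Prop) :
  directed PP ->
  forall l, l <> [] -> Forall PP l ->
  exists C, PP C /\ (forall x, C x -> list_inter l x).
Proof.
  intros dirPP l; induction l as [|A l IH]; intros l_ne0 PPl; [congruence|].
  inversion PPl as [|? ? PPA PPl']; subst.
  destruct l as [|B l'].
  - exists A; split; [exact PPA|]. intros x Ax. now constructor.
  - destruct (IH ltac:(discriminate) PPl') as [C [PPC CsubI]].
    destruct (dirPP A C PPA PPC) as [D [PPD DsubAC]].
    exists D; split; [exact PPD|]. intros x Dx.
    destruct (DsubAC x Dx) as [Ax Cx]. constructor; [exact Ax | exact (CsubI x Cx)].
Qed.

Section Pw_rel.

Variables (X Y : Type) (PP : (X -> Prop) -> Prop).

Local Notation Pw := (@Pw_rel X Y PP).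

Lemma Pw_rel_refl : (exists A, PP A) -> forall f, Pw f f.
Proof. intros [A PPA] f. now exists A. Qed.

Lemma Pw_rel_sym f g : Pw f g -> Pw g f.
Proof. intros [P [PPP eqfg]]. exists P; split; auto. intros x Px; symmetry; auto. Qed.

Lemma Pw_rel_trans : directed PP -> forall f g h, Pw f g -> Pw g h -> Pw f h.
Proof.
  intros dirPP f g h [P [PPP eqfg]] [Q [PPQ eqgh]].
  destruct (dirPP P Q PPP PPQ) as [C [PPC CsubPQ]].
  exists C; split; [exact PPC|]. intros x Cx.
  destruct (CsubPQ x Cx) as [Px Qx]. now rewrite eqfg, eqgh.
Qed.

Lemma Pw_rel_total_of_empty_member :
  (exists P, PP P /\ forall x, ~ P x) -> forall f g, Pw f g.
Proof. intros [P [PPP P0]] f g. exists P; split; [exact PPP|]. intros x Px; now destruct (P0 x). Qed.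

Lemma Pw_rel_cst_neq (y1 y2 : Y) : y1 <> y2 ->
  (forall P, PP P -> exists x, P x) -> ~ Pw (fun _ => y1) (fun _ => y2).
Proof. intros y12 PPne [P [PPP eqP]]. destruct (PPne P PPP) as [x Px]. exact (y12 (eqP x Px)). Qed.

Lemma directed_of_Pw_rel_trans (y1 y2 : Y) : y1 <> y2 ->
  (forall f g h, Pw f g -> Pw g h -> Pw f h) -> directed PP.
Proof.
  intros y12 trans A B PPA PPB.
  pose (indicator := fun (S : X -> Prop) x =>
    if excluded_middle_informative (S x) then y1 else y2).
  assert (rel1 : Pw (fun _ => y1) (indicator A)).
  { exists A; split; [exact PPA|]. intros x Ax; unfold indicator.
    now destruct (excluded_middle_informative (A x)). }
  assert (rel2 : Pw (indicator A) (indicator (fun x => A x /\ B x))).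
  { exists B; split; [exact PPB|]. intros x Bx; unfold indicator.
    destruct (excluded_middle_informative (A x));
      destruct (excluded_middle_informative (A x /\ B x)); tauto. }
  destruct (trans _ _ _ rel1 rel2) as [C [PPC eqC]].
  exists C; split; [exact PPC|]. intros x Cx. specialize (eqC x Cx).
  unfold indicator in eqC.
  destruct (excluded_middle_informative (A x /\ B x)); [assumption | congruence].
Qed.

End Pw_rel.

Theorem mainTheorem2 (X Y : Type) (PP : (X -> Prop) -> Prop)
  (hX : inhabited X) (hY : exists y1 y2 : Y, y1 <> y2)
  (hPP : exists A, PP A) :
  filterbase PP <-> (is_equivalence (@Pw_rel X Y PP) /\ nontrivial_rel (@Pw_rel X Y PP)).
Proof.
  destruct hY as [y1 [y2 y12]].
  split.
  - intros [_ [F0 F2]].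
    assert (PPne : forall P, PP P -> exists x, P x).
    { intros P PPP. destruct (F0 [P] ltac:(discriminate) ltac:(now constructor)) as [x Px].
      inversion Px; eauto. }
    split; [split; [|split]|].
    + exact (Pw_rel_refl hPP).
    + exact (@Pw_rel_sym X Y PP).
    + exact (Pw_rel_trans F2).
    + exists (fun _ => y1), (fun _ => y2). exact (Pw_rel_cst_neq y12 PPne).
  - intros [[_ [_ trans]] [f [g not_fg]]].
    pose proof (directed_of_Pw_rel_trans y12 trans) as F2.
    split; [exact hPP | split; [|exact F2]].
    intros l l_ne0 PPl.
    destruct (directed_list_inter F2 l_ne0 PPl) as [C [PPC CsubI]].
    destruct (classic (exists x, C x)) as [[x Cx] | C0].
    + exists x; auto.
    + exfalso; apply not_fg, Pw_rel_total_of_empty_member.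
      exists C; split; [exact PPC|]. intros x Cx; eauto.
Qed.
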